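(* Let $d\ge 1$ and $q\ge 1$, let $\mathbf c_1,\dots,\mathbf c_q\in\mathbb R^d$ be discrete lattice velocities with weights $w_1,\dots,w_q>0$ and lattice speed of sound $c_s>0$, and let $\mathbf h:\mathbb R^d\to\mathbb R^q$ be given componentwise by $$h_i(\mathbf u)=\sqrt{w_i}\Big(1+\frac{\mathbf c_i\cdot\mathbf u}{2c_s^2}+\frac{(\mathbf c_i\cdot\mathbf u)^2}{8c_s^4}-\frac{\|\mathbf u\|^2}{4c_s^2}\Big).$$ For $\hat{\mathbf u}\in\mathbb R^d$ let $\bar J(\hat{\mathbf u})=[\mathbf h(\hat{\mathbf u}),\partial_1\mathbf h(\hat{\mathbf u}),\dots,\partial_d\mathbf h(\hat{\mathbf u})]\in\mathbb R^{q\times(d+1)}$, and, whenever $\bar J(\hat{\mathbf u})$ has full column rank, define the denoising operator $\mathcal D(\hat{\mathbf u})=\bar J(\hat{\mathbf u})\big(\bar J(\hat{\mathbf u})^\top\bar J(\hat{\mathbf u})\big)^{-1}\bar J(\hat{\mathbf u})^\top$ (the orthogonal projector onto the column space of $\bar J(\hat{\mathbf u})$). Let $g$ be a lattice symmetry, i.e. an orthogonal map $R_g\in O(d)$ together with a permutation $\sigma_g$ of $\{1,\dots,q\}$ such that $\mathbf c_{\sigma_g(i)}=R_g\mathbf c_i$ and $w_{\sigma_g(i)}=w_i$ for all $i$, and let $P_g\in\mathbb R^{q\times q}$ be the permutation matrix with $(P_g\mathbf f)_i=f_{\sigma_g^{-1}(i)}$ for $\mathbf f\in\mathbb R^q$.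 Then for every $\hat{\mathbf u}\in\mathbb R^d$ with $\bar J(\hat{\mathbf u})$ of full column rank, $\bar J(R_g\hat{\mathbf u})$ also has full column rank and $$\mathcal D(R_g\hat{\mathbf u})\,P_g=P_g\,\mathcal D(\hat{\mathbf u}).$$
   Context: This is the setting of a D$d$Q$q$ lattice Boltzmann model. The lattice is assumed to satisfy the standard isotropy conditions: $\sum_i w_i=1$, $\sum_i w_i c_{ik}c_{il}=c_s^2\delta_{kl}$, $\sum_i w_i c_{ik}c_{il}c_{ip}c_{iq}=c_s^4(\delta_{kl}\delta_{pq}+\delta_{kp}\delta_{lq}+\delta_{kq}\delta_{lp})$, and all weighted velocity moments of orders 1, 3 and 5 vanish. The function $\mathbf h$ is the (second-order) square-root equilibrium amplitude per unit density, $\partial_k$ denotes the partial derivative with respect to the $k$-th velocity component. *)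

From HB Require Import structures.
From mathcomp Require Import all_boot all_order all_algebra all_fingroup.
From mathcomp Require Import all_classical all_reals all_analysis.
Set Implicit Arguments. Unset Strict Implicit. Unset Printing Implicit Defensive.
Import Order.TTheory GRing.Theory Num.Theory.
Import numFieldNormedType.Exports.
Local Open Scope ring_scope.

Section LBM.
Variables (R : realType) (d q : nat).

Definition dotv (u v : 'cV[R]_d) : R := \sum_(k < d) u k 0 * v k 0.

Definition evec (k : 'I_d) : 'cV[R]_d := delta_mx k 0.

Definition partial (k : 'I_d) (f : 'cV[R]_d -> R) (u : 'cV[R]_d) : R :=
  'D_(evec k) f u.

Variables (c : 'I_q -> 'cV[R]_d) (w : 'I_q -> R) (cs : R).

Definition lattice_isotropic : Prop :=
  (\sum_i w i = 1) /\
  [/\ (forall k : 'I_d, \sum_i w i * c i k 0 = 0),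
      (forall k l : 'I_d, \sum_i w i * c i k 0 * c i l 0 = cs ^+ 2 * (k == l)%:R),
      (forall k l p : 'I_d, \sum_i w i * c i k 0 * c i l 0 * c i p 0 = 0),
      (forall k l p r : 'I_d,
          \sum_i w i * c i k 0 * c i l 0 * c i p 0 * c i r 0 =
          cs ^+ 4 * ((k == l)%:R * (p == r)%:R + (k == p)%:R * (l == r)%:R
                     + (k == r)%:R * (l == p)%:R)) &
      (forall k l p r s : 'I_d,
          \sum_i w i * c i k 0 * c i l 0 * c i p 0 * c i r 0 * c i s 0 = 0)].

Definition hcomp (i : 'I_q) (u : 'cV[R]_d) : R :=
  Num.sqrt (w i) * (1 + dotv (c i) u / (2 * cs ^+ 2)
                      + (dotv (c i) u) ^+ 2 / (8 * cs ^+ 4)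
                      - dotv u u / (4 * cs ^+ 2)).

Definition Jbar (u : 'cV[R]_d) : 'M[R]_(q, d.+1) :=
  \matrix_(i < q, j < d.+1)
    match unlift ord0 j with
    | None => hcomp i u
    | Some k => partial k (hcomp i) u
    end.

Definition denoise (u : 'cV[R]_d) : 'M[R]_q :=
  Jbar u *m invmx ((Jbar u)^T *m Jbar u) *m (Jbar u)^T.

End LBM.

(* permutation matrix with (P f)_i = f_{sigma^{-1}(i)} *)
Definition Pmat (R : realType) (q : nat) (s : {perm 'I_q}) : 'M[R]_q :=
  perm_mx (s^-1)%g.

(* The amplitude is invariant under a lattice symmetry, h_{σ i}(Q x) = h_i(x),
   and, h being quadratic, its gradient can be computed explicitly and is
   equivariant: ∇h_{σ i}(Q x) = Q ∇h_i(x).  Hence J̄(Q x) = P J̄(x) diag(1, Qᵀ)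
   with P an orthogonal permutation matrix and diag(1, Qᵀ) invertible.  Such a
   factorisation preserves the rank, and the projector J (JᵀJ)⁻¹ Jᵀ onto the
   column space ignores the invertible right factor and is conjugated by P. *)

From HB Require Import structures.
From mathcomp Require Import all_boot all_order all_algebra all_fingroup.
From mathcomp Require Import all_classical all_reals all_analysis.
From mathcomp Require Import ring.
Import Order.TTheory GRing.Theory Num.Theory.
Import numFieldNormedType.Exports.
Set Implicit Arguments. Unset Strict Implicit. Unset Printing Implicit Defensive.
Local Open Scope ring_scope.
Local Open Scope classical_set_scope.

Lemma derive_quadratic (R : realType) (V : normedModType R) (f : V -> R)
    (x v : V) (a b e : R) :
  (forall h : R, f (h *: v + x) = a + b * h + e * h ^+ 2) -> 'D_v f x = b.
Proof.
move=> fE.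
have fx : f x = a by rewrite -[x]add0r -(scale0r v) fE expr0n /=; ring.
apply: cvg_lim => //.
have -> : b = b + e * 0 by rewrite mulr0 addr0.
apply: (@cvg_trans _ ((fun h : R => b + e * h) @ 0^')).
  apply: near_eq_cvg; near=> h.
  have h_neq0 : h != 0 by near: h; exact: nbhs_dnbhs_neq.
  by rewrite /= fx fE -[_ *: _]/(_ * _); field.
apply: cvg_within_filter; apply: cvgD; first exact: cvg_cst.
by apply: cvgM; [exact: cvg_cst | exact: cvg_id].
Unshelve. all: by end_near.
Qed.

Section Dot.
Variables (R : realType) (d : nat).
Implicit Types (a u v : 'cV[R]_d).

Lemma dotvE u v : dotv u v = (u^T *m v) 0 0.
Proof. by rewrite mxE; apply: eq_bigr => k _; rewrite mxE. Qed.

Lemma dotvC u v : dotv u v = dotv v u.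
Proof. by apply: eq_bigr => k _; rewrite mulrC. Qed.

Lemma dotvDr a u v : dotv a (u + v) = dotv a u + dotv a v.
Proof. by rewrite !dotvE mulmxDr mxE. Qed.

Lemma dotvZr a u (h : R) : dotv a (h *: u) = h * dotv a u.
Proof. by rewrite !dotvE -scalemxAr mxE. Qed.

Lemma dotvDl a u v : dotv (u + v) a = dotv u a + dotv v a.
Proof. by rewrite dotvC dotvDr !(dotvC a). Qed.

Lemma dotvZl a u (h : R) : dotv (h *: u) a = h * dotv u a.
Proof. by rewrite dotvC dotvZr dotvC. Qed.

Lemma dotv_evec a k : dotv a (evec R k) = a k 0.
Proof.
rewrite /dotv (bigD1 k) //= big1 => [|j /negbTE jk]; rewrite !mxE ?jk ?eqxx.
  by rewrite mulr1 addr0.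
by rewrite mulr0.
Qed.

Lemma dotv_orthogonal (Q : 'M[R]_d) u v :
  Q^T *m Q = 1%:M -> dotv (Q *m u) (Q *m v) = dotv u v.
Proof. by move=> QQ; rewrite !dotvE trmx_mul -mulmxA (mulmxA Q^T) QQ mul1mx. Qed.

End Dot.

Section Projector.
Variable R : realFieldType.

Lemma trmx_mul_self_eq0 m n (A : 'M[R]_(m, n)) : A^T *m A = 0 -> A = 0.
Proof.
move=> AA0; apply/matrixP => i j; rewrite mxE.
have := congr1 (fun B : 'M[R]_n => B j j) AA0; rewrite !mxE => AAjj.
have sq_ge0 k : true -> 0 <= A^T j k * A k j by rewrite mxE -expr2 sqr_ge0.
have := psumr_eq0P sq_ge0 AAjj isT (i := i).
by rewrite mxE => /eqP; rewrite mulf_eq0 orbb => /eqP.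
Qed.

Lemma gram_unitmx m n (J : 'M[R]_(m, n)) : \rank J = n -> J^T *m J \in unitmx.
Proof.
move=> rkJ; rewrite -row_free_unit; apply: inj_row_free => v vJJ0.
have JvT0 : J *m v^T = 0.
  apply: trmx_mul_self_eq0.
  by rewrite trmx_mul trmxK mulmxA -(mulmxA v) vJJ0 mul0mx.
have /row_free_inj : row_free J^T by rewrite /row_free mxrank_tr rkJ.
by apply; rewrite mul0mx -[v]trmxK -trmx_mul JvT0 trmx0.
Qed.

Lemma invmxM n (A B : 'M[R]_n) : A \in unitmx -> B \in unitmx ->
  invmx (A *m B) = invmx B *m invmx A.
Proof.
move=> uA uB; have uAB : A *m B \in unitmx by rewrite unitmx_mul uA uB.
by rewrite -[RHS]mul1mx -(mulVmx uAB) -!mulmxA (mulKVmx uB) mulmxV ?mulmx1.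
Qed.

Lemma mxrank_mul_unitmx m n (P : 'M[R]_m) (J : 'M[R]_(m, n)) (M : 'M[R]_n) :
  P \in unitmx -> M \in unitmx -> \rank (P *m J *m M) = \rank J.
Proof.
move=> uP uM; rewrite mxrankMfree ?row_free_unit //.
by rewrite -mxrank_tr trmx_mul mxrankMfree ?mxrank_tr // row_free_unit unitmx_tr.
Qed.

Definition col_proj m n (J : 'M[R]_(m, n)) : 'M[R]_m :=
  J *m invmx (J^T *m J) *m J^T.

Lemma col_proj_mul_orth m n (P : 'M[R]_m) (J : 'M[R]_(m, n)) (M : 'M[R]_n) :
    P^T *m P = 1%:M -> M \in unitmx -> J^T *m J \in unitmx ->
  col_proj (P *m J *m M) *m P = P *m col_proj J.
Proof.
move=> PP uM uJJ; have uMT : M^T \in unitmx by rewrite unitmx_tr.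
rewrite /col_proj.
have -> : (P *m J *m M)^T *m (P *m J *m M) = M^T *m (J^T *m J) *m M.
  by rewrite !trmx_mul !mulmxA -(mulmxA _ P^T) PP mulmx1.
rewrite !invmxM ?unitmx_mul ?uMT // !trmx_mul !mulmxA.
by rewrite (mulmxK uM) (mulmxKV uMT) -(mulmxA _ P^T) PP mulmx1.
Qed.

End Projector.

Section Lift0.
Variables (R : pzRingType) (n : nat) (A : 'M[R]_n).

Local Ltac lift0_entry :=
  do ![rewrite mxE /= | rewrite split1 /= | rewrite unlift_none /= | rewrite liftK /=].

Lemma lift0_mx00 : lift0_mx A 0 0 = 1.
Proof. by lift0_entry. Qed.

Lemma lift0_mx0l j : lift0_mx A 0 (lift 0 j) = 0.
Proof. by lift0_entry. Qed.

Lemma lift0_mxl0 i : lift0_mx A (lift 0 i) 0 = 0.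
Proof. by lift0_entry. Qed.

Lemma lift0_mx_lift i j : lift0_mx A (lift 0 i) (lift 0 j) = A i j.
Proof. by lift0_entry. Qed.

End Lift0.

Lemma unitmx_lift0 (R : comUnitRingType) n (A : 'M[R]_n) :
  (lift0_mx A \in unitmx) = (A \in unitmx).
Proof. by rewrite !unitmxE det_ublock det1 mul1r. Qed.

Lemma Pmat_orth (R : realType) q (s : {perm 'I_q}) :
  (Pmat R s)^T *m Pmat R s = 1%:M.
Proof. by rewrite tr_perm_mx -perm_mxM mulVg perm_mx1. Qed.

Section Amplitude.
Variables (R : realType) (d q : nat).
Variables (c : 'I_q -> 'cV[R]_d) (w : 'I_q -> R) (cs : R).

Definition hgrad (i : 'I_q) (x : 'cV[R]_d) : 'cV[R]_d :=
  (Num.sqrt (w i) / (2 * cs ^+ 2)) *: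
    ((1 + dotv (c i) x / (2 * cs ^+ 2)) *: c i - x).

Lemma partial_hcomp i k x : cs != 0 ->
  partial k (hcomp c w cs i) x = hgrad i x k 0.
Proof.
move=> cs_neq0; apply: (@derive_quadratic _ _ _ _ _ (hcomp c w cs i x) _
  (Num.sqrt (w i) * (c i k 0 ^+ 2 / (8 * cs ^+ 4) - 1 / (4 * cs ^+ 2)))).
move=> h; rewrite /hcomp !(dotvDr, dotvDl, dotvZr, dotvZl, dotv_evec).
rewrite (dotvC (evec R k)) dotv_evec !mxE eqxx /=.
by field.
Qed.

Lemma denoiseE x : denoise c w cs x = col_proj (Jbar c w cs x).
Proof. by []. Qed.

Variables (Q : 'M[R]_d) (sg : {perm 'I_q}).
Hypotheses (QQ : Q^T *m Q = 1%:M)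
  (c_sg : forall i, c (sg i) = Q *m c i) (w_sg : forall i, w (sg i) = w i).

Lemma hcomp_sym i x : hcomp c w cs (sg i) (Q *m x) = hcomp c w cs i x.
Proof. by rewrite /hcomp c_sg w_sg !dotv_orthogonal. Qed.

Lemma hgrad_sym i x : hgrad (sg i) (Q *m x) = Q *m hgrad i x.
Proof.
by rewrite /hgrad c_sg w_sg dotv_orthogonal // -scalemxAr mulmxBr -scalemxAr.
Qed.

Lemma Jbar_sym x : cs != 0 ->
  Jbar c w cs (Q *m x) = Pmat R sg *m Jbar c w cs x *m lift0_mx Q^T.
Proof.
move=> cs_neq0; apply/matrixP => i j.
have [{}i ->] : exists i', i = sg i' by exists ((sg^-1)%g i); rewrite permKV.
rewrite -row_permE [RHS]mxE big_ord_recl.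
case: (unliftP ord0 j) => [k|] ->.
- rewrite lift0_mx0l mulr0 add0r mxE liftK partial_hcomp // hgrad_sym mxE.
  apply: eq_bigr => l _.
  rewrite lift0_mx_lift [Q^T _ _]mxE [row_perm _ _ _ _]mxE permK.
  by rewrite [Jbar _ _ _ _ _ _]mxE liftK partial_hcomp // mulrC.
- rewrite lift0_mx00 mulr1 big1 => [|l _]; last by rewrite lift0_mxl0 mulr0.
  by rewrite addr0 !mxE permK unlift_none hcomp_sym.
Qed.

End Amplitude.

Theorem mainTheorem1 (R : realType) (d q : nat) (hd : (0 < d)%N) (hq : (0 < q)%N)
  (c : 'I_q -> 'cV[R]_d) (w : 'I_q -> R) (cs : R)
  (hw : forall i, 0 < w i) (hcs : 0 < cs)
  (hiso : lattice_isotropic c w cs)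
  (Rg : 'M[R]_d) (hRg : Rg^T *m Rg = 1%:M)
  (sg : {perm 'I_q})
  (hc : forall i, c (sg i) = Rg *m c i) (hwg : forall i, w (sg i) = w i)
  (u : 'cV[R]_d) (hrank : \rank (Jbar c w cs u) = d.+1) :
  \rank (Jbar c w cs (Rg *m u)) = d.+1 /\
  denoise c w cs (Rg *m u) *m Pmat R sg = Pmat R sg *m denoise c w cs u.
Proof.
have JE := Jbar_sym hRg hc hwg u (lt0r_neq0 hcs).
have uP : Pmat R sg \in unitmx by exact: unitmx_perm.
have uM : lift0_mx Rg^T \in unitmx.
  by rewrite unitmx_lift0 unitmx_tr; case: (mulmx1_unit hRg).
split; first by rewrite JE mxrank_mul_unitmx.
by rewrite !denoiseE JE col_proj_mul_orth ?Pmat_orth ?gram_unitmx.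
Qed.
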